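(* Let $D$ be a $3$-dicritical digraph. Then $D$ does not contain $O_4$ as a (not necessarily induced) subdigraph.
   Context: A $2$-dicolouring is a map to $\{1,2\}$ whose colour classes induce acyclic subdigraphs (a digon $xy,yx$ is a directed cycle). $D$ is $3$-dicritical if $D$ has no $2$-dicolouring but every proper subdigraph has one. $O_4$ is the digraph on vertices $u,v,x,y$ with arcs $xy,yx$ (a digon), $ux,uy$, $xv,yv$, and $uv$. ''Contains as a subdigraph'' means up to isomorphism. *)

From mathcomp Require Import all_boot.
Set Implicit Arguments. Unset Strict Implicit. Unset Printing Implicit Defensive.

(* A digraph: finite vertex type V with arc relation A (no loops; at most one
   arc per ordered pair; digons allowed). *)
Definition loopless (V : finType) (A : rel V) : Prop := forall x, ~~ A x x.

Definition is_subdigraph (V : finType) (A : rel V) (S : {set V}) (B : rel V) : Prop :=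
  forall x y, B x y -> [/\ A x y, x \in S & y \in S].

Definition has_dicycle_in (V : finType) (B : rel V) (X : {set V}) : Prop :=
  exists s : seq V, [/\ s != [::], uniq s, all (fun v => v \in X) s & cycle B s].

Definition two_dicolouring (V : finType) (S : {set V}) (B : rel V) (c : V -> bool) : Prop :=
  forall b : bool, ~ has_dicycle_in B [set v in S | c v == b].

Definition two_dicolourable (V : finType) (S : {set V}) (B : rel V) : Prop :=
  exists c : V -> bool, two_dicolouring S B c.

Definition dicritical3 (V : finType) (A : rel V) : Prop :=
  ~ two_dicolourable [set: V] A /\
  forall (S : {set V}) (B : rel V), is_subdigraph A S B ->
    (S != [set: V] \/ exists x y, A x y && ~~ B x y) ->
    two_dicolourable S B.

(* O4 on vertices u, v, x, y encoded as 0,1,2,3. *)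
Definition O4_arc (i j : 'I_4) : bool :=
  match nat_of_ord i, nat_of_ord j with
  | 2, 3 | 3, 2 | 0, 2 | 0, 3 | 2, 1 | 3, 1 | 0, 1 => true
  | _, _ => false
  end.

Definition contains_O4 (V : finType) (A : rel V) : Prop :=
  exists f : 'I_4 -> V, injective f /\ forall i j, O4_arc i j -> A (f i) (f j).

From mathcomp Require Import all_boot.
Set Implicit Arguments. Unset Strict Implicit. Unset Printing Implicit Defensive.

(* Delete the arc uv of O4.  By criticality the remaining digraph has a
   2-dicolouring c; as D has none, some c-monochromatic directed cycle of D
   uses uv, so D - uv has a monochromatic walk from v back to u.  Were x or y
   of that colour, u -> x -> v (resp. u -> y -> v) would close it into a
   monochromatic cycle of D - uv.  Hence x and y both get the other colour,
   and the digon xy is monochromatic. *)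

Definition induced (V : finType) (B : rel V) (X : {set V}) (a b : V) : bool :=
  [&& B a b, a \in X & b \in X].
Arguments induced {V} B X a b /.

Definition delete_arc (V : finType) (e : rel V) (u v a b : V) : bool :=
  e a b && ((a != u) || (b != v)).
Arguments delete_arc {V} e u v a b /.

Section ClosedWalks.
Variable V : finType.
Implicit Types (e B : rel V) (X : {set V}) (u v w : V).

Definition has_closed_walk e : bool := [exists a, exists b, e a b && connect e b a].

Lemma eq_has_closed_walk e1 e2 : e1 =2 e2 -> has_closed_walk e1 = has_closed_walk e2.
Proof.
move=> E; apply: eq_existsb => a; apply: eq_existsb => b.
by rewrite E (eq_connect E).
Qed.

Lemma path_induced B X x p : x \in X ->
  path (induced B X) x p = all (fun z => z \in X) p && path B x p.
Proof.
elim: p x => [//|y p IH] x xX /=.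
case: (boolP (y \in X)) => yX; rewrite xX /=; last by rewrite andbF.
by rewrite IH // andbT andbCA.
Qed.

Lemma dicycle_closed_walkP B X :
  reflect (has_dicycle_in B X) (has_closed_walk (induced B X)).
Proof.
apply: (iffP existsP) => [[a /existsP [b /andP [ab /connectP [p pb aE]]]] |].
  rewrite {}aE in ab; case/shortenP: pb ab => q qpath uq _ ab.
  have bX : b \in X by case/and3P: ab.
  move: qpath; rewrite path_induced // => /andP [qX qB].
  exists (b :: q); split => //=; first by rewrite bX.
  by rewrite rcons_path qB; case/and3P: ab.
case=> -[|a q] [//= _ _ /andP [aX qX] aqB].
have : path (induced B X) a (rcons q a) by rewrite path_induced // all_rcons aX qX.
have : a \in rcons q a by rewrite mem_rcons mem_head.
case: (rcons q a) => [//|b r] ar /= /andP [ab br].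
by exists a; apply/existsP; exists b; rewrite ab (path_connect br).
Qed.

Lemma dicycle_digon B X x y :
  B x y -> B y x -> x \in X -> y \in X -> has_dicycle_in B X.
Proof.
move=> xy yx xX yX; apply/dicycle_closed_walkP/existsP; exists x.
by apply/existsP; exists y; rewrite /= xy xX yX connect1 //= yx yX xX.
Qed.

Lemma induced_delete_arc B X u v :
  induced (delete_arc B u v) X =2 delete_arc (induced B X) u v.
Proof. by move=> a b /=; rewrite -!andbA; do !bool_congr. Qed.

Lemma connect_delete_arc e u v a b : connect e a b ->
  connect (delete_arc e u v) a b \/
  [/\ e u v, connect (delete_arc e u v) a u & connect (delete_arc e u v) v b].
Proof.
move/connectP=> [p + ->]; elim: p a => [|c p IH] a /=; first by left.
case/andP=> ac /IH cb.
have [/andP [/eqP au /eqP cv] | ne] := boolP ((a == u) && (c == v)).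
  by subst a c; right; split=> //; case: cb => [|[]].
have ac' : delete_arc e u v a c by rewrite /= ac -negb_and ne.
case: cb => [cb | [uv cu vb]]; first by left; exact: connect_trans (connect1 ac') cb.
by right; split=> //; exact: connect_trans (connect1 ac') cu.
Qed.

Lemma closed_walk_uses_deleted_arc e u v :
  has_closed_walk e -> ~~ has_closed_walk (delete_arc e u v) ->
  e u v /\ connect (delete_arc e u v) v u.
Proof.
case/existsP=> a /existsP [b /andP [ab /(connect_delete_arc u v) ba]] noCW.
have [/andP [/eqP au /eqP bv] | ne] := boolP ((a == u) && (b == v)).
  by subst a b; split=> //; case: ba => [|[]].
have ab' : delete_arc e u v a b by rewrite /= ab -negb_and ne.
case: ba => [ba | [uv bu va]].
  by case/negP: noCW; apply/existsP; exists a; apply/existsP; exists b; rewrite ab'.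
by split=> //; apply: connect_trans va (connect_trans (connect1 ab') bu).
Qed.

Lemma closed_walk_delete_bypassed_arc e u v w :
  e u w -> e w v -> w != u -> w != v ->
  has_closed_walk e -> has_closed_walk (delete_arc e u v).
Proof.
move=> uw wv wNu wNv cw; apply/contraT => noCW.
have [_ vu] := closed_walk_uses_deleted_arc cw noCW.
case/negP: noCW; apply/existsP; exists u; apply/existsP; exists w.
rewrite /= uw wNv orbT /=.
by apply: connect_trans (connect1 _) vu; rewrite /= wv wNu.
Qed.

Lemma dicycle_delete_arc_bypass_notin A X u v w :
  has_dicycle_in A X -> ~ has_dicycle_in (delete_arc A u v) X ->
  A u w -> A w v -> w != u -> w != v -> w \notin X.
Proof.
move=> /dicycle_closed_walkP cycA noCyc uw wv wNu wNv.
have noCW : ~~ has_closed_walk (delete_arc (induced A X) u v).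
  rewrite -(eq_has_closed_walk (induced_delete_arc A X u v)).
  by apply/negP => /dicycle_closed_walkP /noCyc.
have [/and3P [_ uX vX] _] := closed_walk_uses_deleted_arc cycA noCW.
apply/negP => wX; case/negP: noCW.
by apply: (closed_walk_delete_bypassed_arc (w := w)); rewrite //= ?uw ?wv ?uX ?vX ?wX.
Qed.

End ClosedWalks.

Theorem lemma19 (V : finType) (A : rel V) :
  loopless A -> dicritical3 A -> ~ contains_O4 A.
Proof.
move=> _ [notD crit] [f [f_inj O4f]].
set u := f (@Ordinal 4 0 isT); set v := f (@Ordinal 4 1 isT).
set x := f (@Ordinal 4 2 isT); set y := f (@Ordinal 4 3 isT).
have neq i j : i != j -> f i != f j by rewrite (inj_eq f_inj).
have [c colc] : two_dicolourable [set: V] (delete_arc A u v).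
  apply: crit; first by move=> a b /andP [ab _]; rewrite !inE.
  by right; exists u, v; rewrite /= !eqxx andbF O4f.
apply: notD; exists c => b cycb.
have other_colour w : A u w -> A w v -> w != u -> w != v ->
    w \in [set z in [set: V] | c z == ~~ b].
  move=> uw wv wNu wNv.
  have := dicycle_delete_arc_bypass_notin cycb (colc b) uw wv wNu wNv.
  by rewrite !inE; case: (c w); case: (b).
apply: (colc (~~ b)); apply: (@dicycle_digon _ _ _ x y).
- by rewrite /= O4f // neq.
- by rewrite /= O4f // neq.
- by apply: other_colour; rewrite ?O4f ?neq.
- by apply: other_colour; rewrite ?O4f ?neq.
Qed.
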